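(* Let $\mathfrak g$ be of type $A_n$. For every $b\in\mathcal B(\infty)$ and $i\in I$, $\widetilde e_i^\ast(b)\in\mathcal B(\infty)\cup\{\mathbf 0\}$ and $\widetilde f_i^\ast(b)\in\mathcal B(\infty)$.
   Context: $I=\{1,\dots,n\}$. $\mathcal I=\{(s,t)\in\mathbb Z_{>0}\times I:s+t\le n+1\}$; $\mathcal B(\infty)$ is the set of $b=(b_{s,t})_{(s,t)\in\mathcal I}\in\mathbb Z_{\ge0}^{\mathcal I}$ with $b_{1,k}\ge b_{2,k-1}\ge\dots\ge b_{k,1}$ for $1\le k\le n$. Convention: $b_{s,t}=0$, $\mathbf e_{s,t}=0$ for $(s,t)\notin\mathcal I$. $\partial^\ast_{s,t}(b)=b_{s-1,t}-b_{s-1,t+1}-b_{s,t-1}+b_{s,t}$. For $1\le k\le i$: $\Sigma^\ast_k(b)=\sum_{t=1}^k\partial^\ast_{t,i+1-t}(b)$; $\varepsilon_i^\ast(b)=\max_k\Sigma_k^\ast(b)$; $m_i^\ast(b)$, $M_i^\ast(b)$ the smallest and largest maximizing $k$. $\widetilde f_i^\ast(b)=b+\sum_{t=1}^{m_i^\ast(b)}(\mathbf e_{t,i+1-t}-\mathbf e_{t-1,i+1-t})$; $\widetilde e_i^\ast(b)=b-\sum_{t=1}^{M_i^\ast(b)}(\mathbf e_{t,i+1-t}-\mathbf e_{t-1,i+1-t})$ if $\varepsilon_i^\ast(b)>0$, else $\widetilde e_i^\ast(b)=\mathbf 0$ (formal symbol). *)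

From mathcomp Require Import all_boot all_order all_algebra.
Set Implicit Arguments. Unset Strict Implicit. Unset Printing Implicit Defensive.
Import Order.TTheory GRing.Theory Num.Theory.
Local Open Scope ring_scope.

(* An array b = (b_{s,t}) is represented as a total function nat -> nat -> int;
   membership in B(infinity) requires it to vanish outside the index set,
   matching the convention b_{s,t} = 0 for (s,t) outside the index set. *)
Definition arr := nat -> nat -> int.

Definition inI (n s t : nat) : bool := [&& 0 < s, 0 < t & s + t <= n.+1]%N.

Definition inB (n : nat) (b : arr) : Prop :=
  [/\ (forall s t, ~~ inI n s t -> b s t = 0),
      (forall s t, inI n s t -> 0 <= b s t) &
      (forall k j, (1 <= j)%N -> (j < k)%N -> (k <= n)%N ->
         b j.+1 (k - j)%N <= b j (k.+1 - j)%N)].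

Definition evec (n s t : nat) : arr :=
  fun s' t' => if inI n s t && (s' == s) && (t' == t) then 1 else 0.

(* partial^*_{s,t}(b) = b_{s-1,t} - b_{s-1,t+1} - b_{s,t-1} + b_{s,t}
   (only used with s, t >= 1) *)
Definition dstar (b : arr) (s t : nat) : int :=
  b s.-1 t - b s.-1 t.+1 - b s t.-1 + b s t.

Definition Sigma (b : arr) (i k : nat) : int :=
  \sum_(1 <= t < k.+1) dstar b t (i.+1 - t)%N.

Definition epsstar (b : arr) (i : nat) : int :=
  \big[Order.max/Sigma b i 1]_(1 <= k < i.+1) Sigma b i k.

Definition mstar (b : arr) (i : nat) : nat :=
  (find (fun k => Sigma b i k == epsstar b i) (iota 1 i)).+1.

Definition Mstar (b : arr) (i : nat) : nat :=
  (i - find (fun k => Sigma b i k == epsstar b i) (rev (iota 1 i)))%N.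

Definition shiftvec (n i k : nat) : arr :=
  fun s' t' => \sum_(1 <= t < k.+1)
     (evec n t (i.+1 - t)%N s' t' - evec n t.-1 (i.+1 - t)%N s' t').

Definition fstar (n i : nat) (b : arr) : arr :=
  fun s t => b s t + shiftvec n i (mstar b i) s t.

(* None represents the formal symbol 0 *)
Definition estar (n i : nat) (b : arr) : option arr :=
  if 0 < epsstar b i then Some (fun s t => b s t - shiftvec n i (Mstar b i) s t)
  else None.

Definition inB0 (n : nat) (x : option arr) : Prop :=
  match x with Some b => inB n b | None => True end.

From mathcomp Require Import all_boot all_order all_algebra zify.
Set Implicit Arguments.
Unset Strict Implicit.
Unset Printing Implicit Defensive.
Import Order.TTheory GRing.Theory Num.Theory.
Local Open Scope ring_scope.

(* Because row 0 of b vanishes, Sigma^*_k(b) telescopes to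
   b_{k,i+1-k} - b_{k,i-k}: the difference of the k-th entries of the
   antidiagonals s + t = i + 1 and s + t = i.  Both operators change b by +-1
   on an initial segment of each of these two antidiagonals.  Adding 1 on a
   prefix never breaks the monotonicity of an antidiagonal; subtracting 1 on a
   prefix of length k > 0 is harmless exactly when the antidiagonal strictly
   drops right after position k (entries outside the index set count as 0).
   For f~^*_i this drop on s + t = i follows from the minimality of m^*_i, for
   e~^*_i the drop on s + t = i + 1 from the maximality of M^*_i, or from
   epsilon^*_i(b) > 0 when M^*_i = i. *)

Lemma find_iota1P (P : pred nat) m : has P (iota 1 m) ->
  [/\ (find P (iota 1 m) < m)%N, P (find P (iota 1 m)).+1 &
      forall k, (k < find P (iota 1 m))%N -> ~~ P k.+1].
Proof.
move=> hasP; have := hasP; rewrite has_find size_iota => lt_find_m.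
split=> // [|k lt_k_find].
  by have := nth_find 0%N hasP; rewrite nth_iota.
by have := before_find 0%N lt_k_find; rewrite nth_iota ?(ltn_trans lt_k_find) // => ->.
Qed.

Lemma rev_iota1 m : rev (iota 1 m) = map (subn m.+1) (iota 1 m).
Proof.
apply: (@eq_from_nth _ 0%N); first by rewrite size_rev size_map.
move=> k; rewrite size_rev size_iota => lt_k_m.
rewrite nth_rev ?size_iota // (nth_map 0%N) ?size_iota // !nth_iota //; lia.
Qed.

Section EpsilonStar.
Variables (b : arr) (i : nat).

Lemma Sigma_le_epsstar k : (1 <= k <= i)%N -> Sigma b i k <= epsstar b i.
Proof. by move=> k_range; apply: le_bigmax_seq; rewrite ?mem_index_iota. Qed.

Lemma epsstar_attained : (0 < i)%N ->
  exists2 k, (1 <= k <= i)%N & Sigma b i k = epsstar b i.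
Proof.
move=> i_gt0; rewrite /epsstar big_seq.
elim/big_ind: _ => [|_ _ [k k_range <-] [l l_range <-]|k].
- by exists 1%N.
- by case: leP => _; [exists l | exists k].
- by rewrite mem_index_iota => k_range; exists k.
Qed.

Lemma mstarP : (0 < i)%N ->
  [/\ (1 <= mstar b i <= i)%N, Sigma b i (mstar b i) = epsstar b i &
      forall k, (1 <= k < mstar b i)%N -> Sigma b i k < epsstar b i].
Proof.
case/epsstar_attained=> k k_range Sk.
rewrite /mstar; set maximizer := fun k => _.
have hasP : has maximizer (iota 1 i).
  by apply/hasP; exists k; rewrite ?mem_iota ?Sk /maximizer //; lia.
have [lt_find_i /eqP max_m before_m] := find_iota1P hasP.
split=> // [[//|l] l_range].
by rewrite lt_neqAle before_m ?Sigma_le_epsstar //; lia.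
Qed.

Lemma MstarP : (0 < i)%N ->
  [/\ (1 <= Mstar b i <= i)%N, Sigma b i (Mstar b i) = epsstar b i &
      forall k, (Mstar b i < k <= i)%N -> Sigma b i k < epsstar b i].
Proof.
case/epsstar_attained=> k k_range Sk.
rewrite /Mstar rev_iota1 find_map; set maximizer := fun k => _.
have hasP : has (preim (subn i.+1) maximizer) (iota 1 i).
  apply/hasP; exists (i.+1 - k)%N; first by rewrite mem_iota; lia.
  by rewrite /= /maximizer subKn ?Sk //; lia.
have [lt_find_i max_M before_M] := find_iota1P hasP.
split=> [||l l_range]; first lia.
  by move: max_M; rewrite /= subSS => /eqP.
have /before_M : (i - l < find (preim (subn i.+1) maximizer) (iota 1 i))%N by lia.
rewrite /= /maximizer subSS subKn => [ne_l|]; last lia.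
by rewrite lt_neqAle ne_l Sigma_le_epsstar //; lia.
Qed.

End EpsilonStar.

Lemma Sigma_telescope b i k : (forall t, b 0%N t = 0) -> (k <= i)%N ->
  Sigma b i k = b k (i.+1 - k)%N - b k (i - k)%N.
Proof.
move=> b0; elim: k => [|k IHk] le_k_i; first by rewrite /Sigma big_geq // !b0 subrr.
rewrite /Sigma big_nat_recr //= -/(Sigma b i k) IHk 1?ltnW // /dstar /= subSS.
have -> : (i - k).+1 = (i.+1 - k)%N by lia.
have -> : (i - k).-1 = (i - k.+1)%N by lia.
lia.
Qed.

Lemma inB_ext n b c : (forall s t, b s t = c s t) -> inB n b -> inB n c.
Proof.
by move=> eq_bc [out_b ge0_b mono_b]; split=> *; rewrite -?eq_bc; auto.
Qed.

Section BInfinity.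
Variables (n : nat) (b : arr).
Hypothesis bB : inB n b.

Lemma inB_row0 t : b 0%N t = 0.
Proof. by case: bB => out_b _ _; rewrite out_b. Qed.

Lemma inB_col0 s : b s 0%N = 0.
Proof. by case: bB => out_b _ _; rewrite out_b // /inI andbF. Qed.

Lemma inB_ge0 s t : 0 <= b s t.
Proof.
case: bB => out_b ge0_b _; case I_st: (inI n s t); first exact: ge0_b.
by rewrite out_b ?I_st.
Qed.

Lemma inB_antidiag_step s t : (0 < s)%N -> b s.+1 t <= b s t.+1.
Proof.
move=> s_gt0; have [out_b ge0_b mono_b] := bB.
have [st_le_n|st_gt_n] := leqP (s + t) n; last first.
  by rewrite out_b ?inB_ge0 // /inI; lia.
case: t st_le_n => [|t] st_le_n; first by rewrite out_b ?inB_ge0 // /inI; lia.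
have := mono_b (s + t.+1)%N s s_gt0 ltac:(lia) st_le_n.
by rewrite -addnS !addKn.
Qed.

Lemma inB_antidiag_mono s t u : (0 < s)%N -> b (s + u)%N t <= b s (t + u)%N.
Proof.
move=> s_gt0; elim: u t => [|u IHu] t; first by rewrite !addn0.
rewrite addnS -addSnnS; apply: le_trans (IHu t.+1).
by apply: inB_antidiag_step; lia.
Qed.

Lemma Sigma_ltS_drop i k : (0 < k < i)%N -> Sigma b i k < Sigma b i k.+1 ->
  b k.+1 (i - k.+1)%N < b k (i - k)%N.
Proof.
case/andP=> k_gt0 lt_k_i; rewrite !(Sigma_telescope inB_row0) ?(ltnW lt_k_i) // subSS.
have := inB_antidiag_step (i - k) k_gt0; rewrite -subSn ?(ltnW lt_k_i) //.
lia.
Qed.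

Lemma Sigma_gtS_drop i k : (0 < k < i)%N -> Sigma b i k.+1 < Sigma b i k ->
  b k.+1 (i - k)%N < b k (i.+1 - k)%N.
Proof.
case/andP=> k_gt0 lt_k_i; rewrite !(Sigma_telescope inB_row0) ?(ltnW lt_k_i) // subSS.
have := inB_antidiag_step (i - k.+1) k_gt0; rewrite subnSK //.
lia.
Qed.

End BInfinity.

Definition antidiag_prefix (d k : nat) : arr :=
  fun s t => if [&& s + t == d.+1, 0 < s & s <= k]%N then 1 else 0.

Lemma shiftvecE n i k s t : (k <= i <= n)%N ->
  shiftvec n i k s t = antidiag_prefix i k s t - antidiag_prefix i.-1 k.-1 s t.
Proof.
case/andP=> + le_i_n; elim: k => [|k IHk] le_k_i.
  by rewrite /shiftvec big_geq // /antidiag_prefix; do 2 case: ifP; lia.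
rewrite /shiftvec big_nat_recr //= -/(shiftvec n i k s t) IHk 1?ltnW //.
by rewrite /antidiag_prefix /evec /inI; repeat case: ifP; lia.
Qed.

Lemma inB_add_antidiag_prefix n b d k : inB n b -> (k <= d <= n)%N ->
  inB n (fun s t => b s t + antidiag_prefix d k s t).
Proof.
case=> out_b ge0_b mono_b k_range; rewrite /antidiag_prefix.
split=> [s t|s t|l j j_gt0 lt_j_l le_l_n].
- move=> not_inI; rewrite out_b //; move: not_inI; rewrite /inI; case: ifP; lia.
- by move=> /ge0_b; case: ifP; lia.
- by have := mono_b l j j_gt0 lt_j_l le_l_n; repeat case: ifP; lia.
Qed.

Lemma inB_sub_antidiag_prefix n b d k : inB n b -> (k <= d <= n)%N ->
  ((0 < k)%N -> b k.+1 (d - k)%N < b k (d.+1 - k)%N) ->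
  inB n (fun s t => b s t - antidiag_prefix d k s t).
Proof.
move=> bB k_range drop_k; have [out_b ge0_b mono_b] := bB; rewrite /antidiag_prefix.
split=> [s t|s t|l j j_gt0 lt_j_l le_l_n].
- move=> not_inI; rewrite out_b //; move: not_inI; rewrite /inI; case: ifP; lia.
- case: ifP => [/and3P[/eqP st_eq s_gt0 le_s_k] _|_ /ge0_b]; last lia.
  have := inB_antidiag_mono bB (d.+1 - k) (k - s) s_gt0.
  rewrite subnKC // (_ : (d.+1 - k + (k - s))%N = t); last lia.
  have := drop_k (leq_trans s_gt0 le_s_k); have := inB_ge0 bB k.+1 (d - k).
  lia.
- have := mono_b l j j_gt0 lt_j_l le_l_n.
  have [eq_jk|] := eqVneq j k; last by repeat case: ifP; lia.
  have [eq_ld|] := eqVneq l d; last by repeat case: ifP; lia.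
  by subst k l; have := drop_k j_gt0; repeat case: ifP; lia.
Qed.

Lemma inB_fstar n b i : inB n b -> (0 < i <= n)%N -> inB n (fstar n i b).
Proof.
move=> bB /andP[i_gt0 le_i_n]; have [m_range max_m before_m] := mstarP b i_gt0.
apply: (inB_ext (b := fun s t => b s t - antidiag_prefix i.-1 (mstar b i).-1 s t
                                + antidiag_prefix i (mstar b i) s t)).
  by move=> s t; rewrite /fstar shiftvecE; lia.
apply: inB_add_antidiag_prefix; last lia.
apply: inB_sub_antidiag_prefix => //; first lia.
case: (mstar b i) m_range max_m before_m => [|[|k]] // m_range max_m before_m _.
rewrite /= prednK // (_ : (i.-1 - k.+1 = i - k.+2)%N); last lia.
apply: (Sigma_ltS_drop bB); first lia.
by rewrite max_m before_m //; lia.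
Qed.

Lemma inB0_estar n b i : inB n b -> (0 < i <= n)%N -> inB0 n (estar n i b).
Proof.
move=> bB /andP[i_gt0 le_i_n]; rewrite /estar; case: ltP => //= eps_gt0.
have [M_range max_M after_M] := MstarP b i_gt0.
apply: (inB_ext (b := fun s t => b s t - antidiag_prefix i (Mstar b i) s t
                                + antidiag_prefix i.-1 (Mstar b i).-1 s t)).
  by move=> s t; rewrite shiftvecE; lia.
apply: inB_add_antidiag_prefix; last lia.
apply: inB_sub_antidiag_prefix => // [|_]; first lia.
have [lt_M_i|ge_M_i] := ltnP (Mstar b i) i.
  by apply: (Sigma_gtS_drop bB); [lia | rewrite max_M after_M //; lia].
have eq_M : Mstar b i = i by lia.
move: eps_gt0; rewrite -max_M eq_M (Sigma_telescope (inB_row0 bB)) // subnn subSnn.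
by rewrite !(inB_col0 bB) subr0.
Qed.

Theorem proposition6p4 (n : nat) (b : arr) (i : nat) :
  inB n b -> (1 <= i <= n)%N ->
  inB0 n (estar n i b) /\ inB n (fstar n i b).
Proof. by move=> bB i_range; split; [exact: inB0_estar | exact: inB_fstar]. Qed.
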